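(* Let $\mathcal I$ be an instance of the a priori TRP on a metric $(V,d)$ with root $r$, $n=|V|$, and probabilities $\{p_v\}$. Let $X=\{v\in V: p_v\ge 1/n^2\}$, $p=\frac1n\min_{v\in X}p_v$, and let $\mathcal J$ be the uniform instance on the vertex set $\bigcup_{v\in X}S_v$, where $S_v$ consists of $t_v=\lceil p_v/p\rceil$ co-located copies of $v$ (distance $0$ within $S_v$, distance $d(u,v)$ between copies of $u$ and $v$), each copy independently active with probability $p$. Suppose $\widehat\pi$ is a consecutive master tour on $\mathcal J$ (visiting each $S_v$ consecutively) whose expected latency is at most $\rho\,\mathrm{OPT}(\mathcal J)$, and let $\pi$ be the tour on $X$ visiting the vertices of $X$ in the order in which the groups $S_v$ appear in $\widehat\pi$. Then, with $A$ the random active set of $\mathcal I$, $$\mathbb{E}_A\Big[\sum_{v\in A\cap X}\mathsf{LAT}^A_\pi(v)\Big]\le(1+o(1))\left(\frac{e}{e-1}\right)^4\rho\cdot\mathrm{OPT}_X,$$ where $\mathrm{OPT}_X$ is the optimal value of the a priori TRP instance restricted to the vertices $X$, and $o(1)$ is with respect to $n\to\infty$.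
   Context: An instance of the a priori TRP consists of a finite metric $(V,d)$, a root $r$, and independent activation probabilities $p_v$. A master tour is a tour from $r$ visiting all vertices; for a random active set $A$ (each $v$ independently active with probability $p_v$), the tour is shortcut to $A$, and $\mathsf{LAT}^A_\pi(v)$ is the distance from $r$ to $v$ along the shortcut tour. The expected latency (cost) of a master tour is the expected sum of latencies of active vertices; $\mathrm{OPT}$ denotes the minimum cost over master tours. *)

From HB Require Import structures.
From mathcomp Require Import all_boot all_order all_algebra.
From mathcomp Require Import all_classical all_reals all_analysis.
Set Implicit Arguments. Unset Strict Implicit. Unset Printing Implicit Defensive.
Import Order.TTheory GRing.Theory Num.Theory.
Local Open Scope ring_scope.

Section APrioriTRP.
Variable R : realType.

Section Generic.
Variable T : finType.
(* dr x = distance from the root to x;  d x y = distance between x and y *)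
Variables (dr : T -> R) (d : T -> T -> R).

Fixpoint path_len (x : T) (s : seq T) : R :=
  if s is y :: s' then d x y + path_len y s' else 0.

(* distance from the root to v along the (shortcut) tour s *)
Definition latency (s : seq T) (v : T) : R :=
  if take (index v s).+1 s is x :: s' then dr x + path_len x s' else 0.

Definition is_tour (U : {set T}) (s : seq T) : Prop :=
  uniq s /\ forall x, (x \in s) = (x \in U).

Definition prob_active (U : {set T}) (q : T -> R) (A : {set T}) : R :=
  \prod_(v in U) (if v \in A then q v else 1 - q v).

Definition exp_lat (U : {set T}) (q : T -> R) (s : seq T) : R :=
  \sum_(A : {set T} | A \subset U)
     prob_active U q A * \sum_(v <- s | v \in A) latency [seq x <- s | x \in A] v.

Definition OPT (U : {set T}) (q : T -> R) : R :=
  \big[Num.min/exp_lat U q (enum U)]_(s <- permutations (enum U)) exp_lat U q s.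
End Generic.

Definition is_metric (V : finType) (d : V -> V -> R) : Prop :=
  [/\ forall x y, 0 <= d x y, forall x y, d x y = 0 <-> x = y,
      forall x y, d x y = d y x & forall x y z, d x z <= d x y + d y z].

Section Reduction.
Variables (V : finType) (pv : V -> R).

Definition nV : R := (#|V|)%:R.

Definition Xset : {set V} := [set v | 1 / (nV ^+ 2) <= pv v].

(* p = (1/n) min_{v in X} p_v  (the default 1 is irrelevant when X <> empty,
   since p_v <= 1) *)
Definition pJ : R := (1 / nV) * \big[Num.min/1]_(v in Xset) pv v.

Definition tcopies (v : V) : nat := absz (Num.ceil (pv v / pJ)).

Definition Kbound : nat := \max_(v : V) tcopies v.

(* copies: (v, i) stands for the i-th copy of v *)
Definition Jtype : finType := (V * 'I_Kbound)%type.

Definition SJ : {set Jtype} :=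
  [set x : Jtype | (x.1 \in Xset) && (x.2 < tcopies x.1)%N].

Definition consecutive (s : seq Jtype) : Prop :=
  forall (v : V) (s1 s2 s3 : seq Jtype), s = s1 ++ s2 ++ s3 ->
    v \in [seq x.1 | x <- s1] -> v \in [seq x.1 | x <- s3] ->
    all (fun x : Jtype => x.1 == v) s2.

Definition induced_tour (s : seq Jtype) : seq V := undup [seq x.1 | x <- s].

End Reduction.
End APrioriTRP.

From HB Require Import structures.
From mathcomp Require Import all_boot all_order all_algebra.
From mathcomp Require Import all_classical all_reals all_analysis.
From mathcomp Require Import ring lra.
From mathcomp Require Import fintype finset.
Import Order.TTheory GRing.Theory Num.Theory.
Import numFieldNormedType.Exports.
Set Implicit Arguments. Unset Strict Implicit. Unset Printing Implicit Defensive.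
Local Open Scope ring_scope.

(* Write E_q for the expectation over a random active set containing each
   vertex independently with probability q. Both expected latencies split
   vertex by vertex: cost = sum_v q_v E_q[latency of v given the other active
   vertices]. In the uniform instance the copies of a vertex are co-located and
   visited consecutively, so the latency of a copy only sees which groups S_u
   are hit, and S_u is hit independently with probability
   q_u = 1 - (1 - p)^{t_u}, which lies between (1 - 1/e) p_u and
   t_u p <= (1 + 1/n) p_u. The latency of a vertex is monotone in the active
   set, and thinning the active set independently with retention probabilities
   at least a keeps a (2a - 1) fraction of it in expectation: every edge of the
   shortcut tour survives with probability at least 2a - 1, and the triangle
   inequality handles the rest. Comparing the two instances in both directions
   gives cost(pi) <= (1 - 2/e)^{-1} cost_J(pi_J) <= (1 - 2/e)^{-1} rho OPT_J and
   OPT_J <= (1 + 1/n)(n + 1)/(n - 1) OPT_X; finally (1 - 2/e)^{-1} <= (e/(e-1))^4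
   and (1 + 1/n)(n + 1)/(n - 1) <= 1 + 16/(n + 1). When all of X sits at the
   root, both sides vanish. *)

Lemma set_ind (T : finType) (P : {set T} -> Prop) :
  P set0 -> (forall (x : T) (U : {set T}), x \notin U -> P U -> P (x |: U)) ->
  forall U, P U.
Proof.
move=> P0 PS U; have [n leUn] := ubnP #|U|; elim: n U leUn => [|n IH] U.
  by rewrite ltn0.
case: (set_0Vmem U) => [-> //|[x xU]] ltUn.
rewrite -(setD1K xU); apply: PS; first by rewrite !inE eqxx.
by apply: IH; rewrite (cardsD1 x U) xU in ltUn.
Qed.

Section Expectation.
Variables (R : realType) (T : finType).
Implicit Types (U A B W D : {set T}) (q b : T -> R) (g h : {set T} -> R).

Definition expect U q g : R :=
  \sum_(A : {set T} | A \subset U) prob_active U q A * g A.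

Lemma notin_subset A U x : A \subset U -> x \notin U -> x \notin A.
Proof. by move=> sAU; apply: contra => /(subsetP sAU). Qed.

Lemma sum_subsetU1 U x (F : {set T} -> R) : x \notin U ->
  \sum_(A : {set T} | A \subset x |: U) F A =
  \sum_(B : {set T} | B \subset U) (F B + F (x |: B)).
Proof.
move=> xU; rewrite big_split /= (bigID (fun A => x \in A)) /= addrC.
congr (_ + _).
- apply: eq_bigl => A; apply/andP/idP => [[sA xA]|sA].
    by rewrite -(setU1K xU) subsetD1 sA.
  by rewrite (subset_trans sA (subsetUr _ _)) (notin_subset sA).
- rewrite (reindex_onto (fun B => x |: B) (fun A => A :\ x)) /=; last first.
    by move=> A /andP[_ xA]; rewrite setD1K.
  apply: eq_bigl => B; rewrite setU11 andbT.
  apply/andP/idP => [[sB /eqP eB]|sB].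
    by rewrite -(setU1K xU) -eB setSD.
  by rewrite setUS // setU1K // (notin_subset sB).
Qed.

Lemma prob_activeU1 U q x A : x \notin U ->
  prob_active (x |: U) q A = (if x \in A then q x else 1 - q x) * prob_active U q A.
Proof. by move=> xU; rewrite /prob_active big_setU1. Qed.

Lemma prob_active_setU1_notin U q x A : x \notin U ->
  prob_active U q (x |: A) = prob_active U q A.
Proof.
move=> xU; apply: eq_bigr => v vU; rewrite in_setU1.
by case: eqP => // evx; rewrite -evx vU in xU.
Qed.

Lemma prob_active_ge0 U q A :
  {in U, forall v, 0 <= q v <= 1} -> 0 <= prob_active U q A.
Proof.
move=> q01; apply: prodr_ge0 => v /q01 /andP[q0 q1].
by case: ifP; rewrite ?subr_ge0.
Qed.

Lemma expect_setU1 U q x g : x \notin U ->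
  expect (x |: U) q g =
  q x * expect U q (fun A => g (x |: A)) + (1 - q x) * expect U q g.
Proof.
move=> xU; rewrite /expect sum_subsetU1 // big_split /= addrC !mulr_sumr.
congr (_ + _); apply: eq_bigr => B sB.
- by rewrite prob_activeU1 // setU11 prob_active_setU1_notin // mulrA.
- by rewrite prob_activeU1 // (negPf (notin_subset sB xU)) mulrA.
Qed.

Lemma expect_set0 q g : expect set0 q g = g set0.
Proof.
rewrite /expect (big_pred1 set0) ?/prob_active ?big_set0 ?mul1r // => A.
by rewrite subset0.
Qed.

Lemma eq_expect U q g h :
  (forall A, A \subset U -> g A = h A) -> expect U q g = expect U q h.
Proof. by move=> e; apply: eq_bigr => A sA; rewrite e. Qed.

Lemma eq_expect_prob U q q' g : {in U, q =1 q'} -> expect U q g = expect U q' g.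
Proof.
move=> e; apply: eq_bigr => A _; congr (_ * _); apply: eq_bigr => v vU.
by rewrite e.
Qed.

Lemma expect_cst U q c : expect U q (fun _ => c) = c.
Proof.
elim/set_ind: U => [|x U xU IH]; first by rewrite expect_set0.
by rewrite expect_setU1 // IH; ring.
Qed.

Lemma expectD U q g h :
  expect U q (fun A => g A + h A) = expect U q g + expect U q h.
Proof. by rewrite /expect -big_split /=; apply: eq_bigr => A _; rewrite mulrDr. Qed.

Lemma expectZl U q a g : expect U q (fun A => a * g A) = a * expect U q g.
Proof. by rewrite /expect mulr_sumr; apply: eq_bigr => A _; rewrite mulrCA. Qed.

Lemma expectZr U q a g : expect U q (fun A => g A * a) = expect U q g * a.
Proof. by rewrite mulrC -expectZl; apply: eq_expect => A _; rewrite mulrC. Qed.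

Lemma ler_expect U q g h : {in U, forall v, 0 <= q v <= 1} ->
  (forall A, A \subset U -> g A <= h A) -> expect U q g <= expect U q h.
Proof.
move=> q01 le; apply: ler_sum => A sA; apply: ler_wpM2l; last exact: le.
exact: prob_active_ge0.
Qed.

Lemma expect_ge0 U q g : {in U, forall v, 0 <= q v <= 1} ->
  (forall A, 0 <= g A) -> 0 <= expect U q g.
Proof. by move=> q01 g0; rewrite -(expect_cst U q 0); apply: ler_expect. Qed.

Lemma expect_prob0 U q g : {in U, q =1 fun=> 0} -> expect U q g = g set0.
Proof.
elim/set_ind: U g => [|x U xU IH] g q0; first by rewrite expect_set0.
rewrite expect_setU1 // q0 ?setU11 // mul0r add0r subr0 mul1r IH //.
by move=> v vU; rewrite q0 // in_setU1 vU orbT.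
Qed.

Lemma expect_cond U q v g : v \in U ->
  expect U q (fun A => if v \in A then g A else 0) =
  q v * expect (U :\ v) q (fun A => g (v |: A)).
Proof.
move=> vU; have vUv : v \notin U :\ v by rewrite !inE eqxx.
rewrite -{1}(setD1K vU) expect_setU1 //.
have -> : expect (U :\ v) q (fun A => if v \in A then g A else 0) =
          expect (U :\ v) q (fun=> 0).
  by apply: eq_expect => A sA; rewrite (negPf (notin_subset sA vUv)).
rewrite expect_cst mulr0 addr0; congr (_ * _).
by apply: eq_expect => A _; rewrite setU11.
Qed.

Lemma expect_indicator U q y :
  expect U q (fun A => (y \in A)%:R) = if y \in U then q y else 0.
Proof.
case: (boolP (y \in U)) => yU.
  rewrite (eq_expect _ (h := fun A => if y \in A then 1 else 0)); last first.
    by move=> A _; case: (y \in A).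
  by rewrite expect_cond // expect_cst mulr1.
rewrite (eq_expect _ (h := fun=> 0)) ?expect_cst // => A sA.
by rewrite (negPf (notin_subset sA yU)).
Qed.

Lemma expect_local W D q g : [disjoint W & D] ->
  (forall A, g A = g (A :&: W)) -> expect (W :|: D) q g = expect W q g.
Proof.
move=> dWD gW; elim/set_ind: D dWD => [|x D xD IH] dWD; first by rewrite setU0.
have xW : x \notin W by rewrite (disjointFl dWD) // setU11.
have dWD' : [disjoint W & D] by apply: disjointWr dWD; apply: subsetUr.
rewrite setUCA expect_setU1; last by rewrite in_setU negb_or xW.
have -> : expect (W :|: D) q (fun A => g (x |: A)) = expect (W :|: D) q g.
  apply: eq_expect => A _; rewrite gW [RHS]gW setIUl.
  by rewrite disjoint_setI0 ?set0U // disjoints1.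
by rewrite IH //; ring.
Qed.

Lemma ler_expect_prob U q q' g :
  {in U, forall v, 0 <= q v <= 1} -> {in U, forall v, 0 <= q' v <= 1} ->
  {in U, forall v, q v <= q' v} ->
  (forall A B, A \subset B -> g A <= g B) -> expect U q g <= expect U q' g.
Proof.
elim/set_ind: U g => [|x U xU IH] g q01 q'01 qq' gmono; first by rewrite !expect_set0.
have inU v : v \in U -> v \in x |: U by rewrite in_setU1 => ->; rewrite orbT.
have q01U : {in U, forall v, 0 <= q v <= 1} by move=> v /inU; apply: q01.
have q'01U : {in U, forall v, 0 <= q' v <= 1} by move=> v /inU; apply: q'01.
have qq'U : {in U, forall v, q v <= q' v} by move=> v /inU; apply: qq'.
set gx := fun A => g (x |: A).
have gxmono A B : A \subset B -> gx A <= gx B by move=> sAB; apply/gmono/setUS.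
have le_gx : expect U q' g <= expect U q' gx.
  by apply: ler_expect => // A _; apply/gmono/subsetUr.
have /andP[qx0 qx1] := q01 x (setU11 _ _).
have qqx := qq' x (setU11 _ _).
rewrite !expect_setU1 //.
apply: (@le_trans _ _ (q x * expect U q' gx + (1 - q x) * expect U q' g)).
  by apply: lerD; apply: ler_wpM2l; rewrite ?subr_ge0 //; apply: IH.
(* moving the mass [q' x - q x] from [expect U q' g] to the larger [expect U q' gx] *)
rewrite -subr_ge0 (_ : _ - _ = (q' x - q x) * (expect U q' gx - expect U q' g)).
  by apply: mulr_ge0; rewrite subr_ge0.
by ring.
Qed.

Lemma expect_thin U q b g :
  expect U q (fun A => expect A b g) = expect U (fun v => q v * b v) g.
Proof.
elim/set_ind: U g => [|x U xU IH] g; first by rewrite !expect_set0.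
rewrite !expect_setU1 //.
have -> : expect U q (fun A => expect (x |: A) b g) =
          expect U q (fun A => b x * expect A b (fun B => g (x |: B)) +
                               (1 - b x) * expect A b g).
  by apply: eq_expect => A sA; rewrite expect_setU1 // (notin_subset sA xU).
by rewrite expectD !expectZl !IH; ring.
Qed.

End Expectation.

Section ImageExpectation.
Variables (R : realType) (J V : finType) (f : J -> V).

Lemma expect_setU1_coin (W : {set V}) (q : V -> R) u p (h : {set V} -> R) :
  u \in W ->
  p * expect W q (fun B => h (u |: B)) + (1 - p) * expect W q h =
  expect W (fun w => if w == u then 1 - (1 - p) * (1 - q u) else q w) h.
Proof.
move=> uW; have uWu : u \notin W :\ u by rewrite !inE eqxx.
rewrite -(setD1K uW) !expect_setU1 // eqxx.
have -> : expect (W :\ u) q (fun A => h (u |: (u |: A))) =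
          expect (W :\ u) q (fun A => h (u |: A)).
  by apply: eq_expect => A _; rewrite setUA setUid.
have q_off g : expect (W :\ u) q g =
    expect (W :\ u) (fun w => if w == u then 1 - (1 - p) * (1 - q u) else q w) g.
  by apply: eq_expect_prob => w; rewrite !inE => /andP[/negPf ->].
by rewrite -!q_off; ring.
Qed.

Lemma card_fiber_setU1 (U : {set J}) x w : x \notin U ->
  #|[set y in x |: U | f y == w]| = ((f x == w) + #|[set y in U | f y == w]|)%N.
Proof.
move=> xU; case: (eqVneq (f x) w) => [fxw|fxw].
  have -> : [set y in x |: U | f y == w] = x |: [set y in U | f y == w].
    by apply/setP => y; rewrite !inE; case: eqP => [->|]; rewrite ?fxw ?eqxx.
  by rewrite cardsU1 !inE (negPf xU).
apply: eq_card => y; rewrite !inE.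
by case: eqP => // ->; rewrite (negPf fxw) (negPf xU).
Qed.

Lemma expect_image (U : {set J}) (W : {set V}) p (h : {set V} -> R) :
  expect U (fun=> p) (fun A => h (f @: A :&: W)) =
  expect W (fun u => 1 - (1 - p) ^+ #|[set y in U | f y == u]|) h.
Proof.
elim/set_ind: U h => [|x U xU IH] h.
  rewrite expect_set0 imset0 set0I expect_prob0 // => u _.
  rewrite (_ : [set y in set0 | _] = set0) ?cards0 ?subrr //.
  by apply/setP => y; rewrite !inE.
rewrite expect_setU1 //.
have image_x A : f @: (x |: A) :&: W = if f x \in W then f x |: (f @: A :&: W)
                                       else f @: A :&: W.
  rewrite imsetU1 setIUl; case: ifP => fxW.
    by rewrite (setIidPl _) // sub1set.
  by rewrite disjoint_setI0 ?set0U // disjoints1 fxW.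
under eq_expect => A _ do rewrite image_x.
case: (boolP (f x \in W)) => fxW.
  rewrite (IH (fun B => h (f x |: B))) IH expect_setU1_coin //.
  apply: eq_expect_prob => w _; rewrite card_fiber_setU1 //.
  by case: (eqVneq w (f x)) => [->|_]; rewrite ?eqxx ?exprS /=; ring.
rewrite IH -mulrDl (addrC p) subrK mul1r; apply: eq_expect_prob => w wW.
rewrite card_fiber_setU1 // (_ : (f x == w) = false) //.
by apply: contraNF fxW => /eqP ->.
Qed.

End ImageExpectation.

Section Latency.
Variables (R : realType) (T : finType) (dr : T -> R) (d : T -> T -> R).

(* [None] stands for the root. *)
Definition hop (zo : option T) (y : T) : R := if zo is Some z then d z y else dr y.

Fixpoint lat_from (zo : option T) (s : seq T) (v : T) : R :=
  if s is y :: s' then hop zo y + (if y == v then 0 else lat_from (Some y) s' v)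
  else 0.

Lemma path_len_take s z v :
  path_len d z (take (index v s).+1 s) = lat_from (Some z) s v.
Proof.
elim: s z => [|y s IH] z //=; rewrite eq_sym.
by case: eqP => _ /=; rewrite ?take0 ?IH.
Qed.

Lemma latencyE s v : latency dr d s v = lat_from None s v.
Proof.
case: s => [|y s] //; rewrite /latency /= eq_sym.
by case: eqP => _ /=; rewrite ?take0 ?path_len_take.
Qed.

Lemma lat_from_eq0 s v :
  (forall y, y \in s -> dr y = 0) ->
  (forall z y, dr z = 0 -> dr y = 0 -> d z y = 0) ->
  forall zo, (if zo is Some z then dr z = 0 else True) -> lat_from zo s v = 0.
Proof.
move=> s0 d0; elim: s s0 => [|y s IH] s0 zo z0 //=.
have dy : dr y = 0 by apply: s0; exact: mem_head.
have -> : hop zo y = 0 by case: zo z0 => [z /d0|_] //=; apply.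
rewrite add0r; case: ifP => // _; apply: IH => // w ws.
by apply: s0; rewrite in_cons ws orbT.
Qed.

(* [ind y] is the indicator that [y] survives a thinning and [c] that of the
   previous vertex: an edge counts with weight at most 1 when both endpoints
   survive and with a nonpositive weight otherwise. *)
Fixpoint lat_lb (ind : T -> R) (c : R) zo s v : R :=
  if s is y :: s' then (c + ind y - 1) * hop zo y +
     (if y == v then 0 else lat_lb ind (ind y) (Some y) s' v)
  else 0.

Section Nonnegative.
Hypotheses (dr_ge0 : forall y, 0 <= dr y) (d_ge0 : forall x y, 0 <= d x y).

Lemma hop_ge0 zo y : 0 <= hop zo y.
Proof. by case: zo => [z|]; [exact: d_ge0|exact: dr_ge0]. Qed.

Lemma lat_from_ge0 zo s v : 0 <= lat_from zo s v.
Proof.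
elim: s zo => [|y s IH] zo //=; rewrite addr_ge0 ?hop_ge0 //.
by case: ifP.
Qed.

Hypotheses (dr_tri : forall y w, dr w <= dr y + d y w)
           (d_tri : forall z y w, d z w <= d z y + d y w).

Lemma hop_tri zo y w : hop zo w <= hop zo y + d y w.
Proof. by case: zo => [z|]; [exact: d_tri|exact: dr_tri]. Qed.

Lemma lat_from_tri zo y s v : lat_from zo s v <= hop zo y + lat_from (Some y) s v.
Proof.
case: s => [|w s] /=; first by rewrite addr0 hop_ge0.
by rewrite addrA lerD2r hop_tri.
Qed.

Lemma lat_from_filter_mono (P P' : pred T) v : subpred P P' -> P v ->
  forall s zo, lat_from zo [seq w <- s | P w] v <= lat_from zo [seq w <- s | P' w] v.
Proof.
move=> PP' Pv; elim=> [|y s IH] zo //=.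
case Py: (P y); first by rewrite (PP' y Py) /=; case: ifP => _; rewrite ?lerD2l.
case: (P' y) => //=; have -> : (y == v) = false by apply: contraFF Py => /eqP ->.
exact: le_trans (IH zo) (lat_from_tri _ _ _ _).
Qed.

Lemma hop_le_lat_from zo s v : v \in s -> hop zo v <= lat_from zo s v.
Proof.
elim: s zo => [|y s IH] zo //=; rewrite in_cons.
case: (eqVneq y v) => [->|nyv] /=; first by rewrite addr0.
by move=> /(IH (Some y)); rewrite -(lerD2l (hop zo y)); apply: le_trans (hop_tri _ _ _).
Qed.

Lemma lat_lb_le_filter (P : pred T) v :
  forall s (b : bool) zo zo', (b -> zo = zo') ->
  lat_lb (fun y => (P y)%:R) b%:R zo s v <= lat_from zo' [seq w <- s | P w] v.
Proof.
elim=> [|y s IH] b zo zo' bzo //=.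
case Py: (P y) => /=.
  apply: lerD; last by case: ifP => _ //; exact: (IH true).
  case: b bzo => [/(_ isT) ->|_] /=; first by rewrite addrK mul1r.
  by rewrite add0r subrr mul0r hop_ge0.
rewrite -[X in _ <= X]add0r; apply: lerD.
  by rewrite addr0 mulr_le0_ge0 ?hop_ge0 // subr_le0 lern1 leq_b1.
by case: ifP => _; [exact: lat_from_ge0|exact: (IH false)].
Qed.

(* By linearity, the weight of each edge has mean at least [2 a - 1]. *)
Lemma expect_lat_lb (U : {set T}) q (ind : {set T} -> T -> R) a v :
  forall (s : seq T) C zo,
  (forall y, y \in s -> a <= expect U q (fun B => ind B y)) -> a <= expect U q C ->
  (2 * a - 1) * lat_from zo s v <=
  expect U q (fun B => lat_lb (ind B) (C B) zo s v).
Proof.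
elim=> [|y s IH] C zo ind_ge C_ge /=; first by rewrite mulr0 (expect_cst U q 0).
rewrite expectD expectZr !expectD expect_cst mulrDr.
apply: lerD.
  apply: ler_wpM2r; first exact: hop_ge0.
  by have := ind_ge y (mem_head _ _); lra.
case: ifP => _; first by rewrite mulr0 (expect_cst U q 0).
apply: IH; last exact/ind_ge/mem_head.
by move=> w ws; apply: ind_ge; rewrite in_cons ws orbT.
Qed.

End Nonnegative.
End Latency.

Section Blocks.
Variables (R : realType) (J V : finType) (f : J -> V).
Variables (drV : V -> R) (dV : V -> V -> R).
Hypothesis dV_refl : forall u, dV u u = 0.
Let drJ y := drV (f y).
Let dJ y y' := dV (f y) (f y').

Lemma hop_comp zo y : hop drJ dJ zo y = hop drV dV (omap f zo) (f y).
Proof. by case: zo. Qed.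

Lemma lat_from_block_mem x rest : forall c w, {in c, forall y, f y = f w} ->
  x \in c -> lat_from drJ dJ (Some w) (c ++ rest) x = 0.
Proof.
elim=> [|y c IH] w fc //= xc; have fy := fc y (mem_head _ _).
rewrite /dJ fy dV_refl add0r; case: (eqVneq y x) => // nyx.
apply: IH; last by move: xc; rewrite in_cons eq_sym (negPf nyx).
by move=> z zc; rewrite fy; apply: fc; rewrite in_cons zc orbT.
Qed.

Lemma lat_from_block_notin x rest : forall c w, {in c, forall y, f y = f w} ->
  x \notin c ->
  lat_from drJ dJ (Some w) (c ++ rest) x = lat_from drJ dJ (Some w) rest x.
Proof.
elim=> [|y c IH] w fc //=; rewrite in_cons negb_or eq_sym => /andP[/negPf -> xc].
have fy := fc y (mem_head _ _); rewrite /dJ fy dV_refl add0r IH.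
- by case: (rest) => [|z s] //=; rewrite /dJ fy.
- by move=> z zc; rewrite fy; apply: fc; rewrite in_cons zc orbT.
- exact: xc.
Qed.

Lemma lat_from_flatten (bb : V -> seq J) x :
  (forall u y, y \in bb u -> f y = u) -> x \in bb (f x) ->
  forall (pi : seq V) zo,
  lat_from drJ dJ zo (flatten (map bb pi)) x =
  lat_from drV dV (omap f zo) [seq u <- pi | bb u != [::]] (f x).
Proof.
move=> f_bb x_bb; elim=> [|u pi IH] zo //=.
case E: (bb u) => [|y c] /=; first exact: IH.
have in_bb z : z \in c -> f z = u.
  by move=> zc; apply: f_bb; rewrite E in_cons zc orbT.
have fy : f y = u by apply: f_bb; rewrite E mem_head.
have f_c : {in c, forall z, f z = f y} by move=> z /in_bb ->.
rewrite hop_comp fy; case: (eqVneq u (f x)) => [eu|nu].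
  have : x \in y :: c by rewrite -E eu.
  rewrite in_cons eq_sym; case: (eqVneq y x) => //= _ xc.
  by rewrite lat_from_block_mem.
have nyx : y != x by apply: contraNneq nu => <-; rewrite fy.
have xc : x \notin c by apply: contraNN nu => /in_bb <-.
by rewrite (negPf nyx) lat_from_block_notin // IH /= fy.
Qed.

End Blocks.

Section Thinning.
Variables (R : realType) (T : finType) (dr : T -> R) (d : T -> T -> R).
Implicit Types (U A B W : {set T}) (q b : T -> R) (s : seq T).

Definition lat_at s v B : R := latency dr d [seq w <- s | w \in v |: B] v.

Lemma exp_lat_decomp U q s : {subset s <= U} ->
  exp_lat dr d U q s = \sum_(v <- s) q v * expect (U :\ v) q (lat_at s v).
Proof.
move=> sU; rewrite [LHS](_ : _ = \sum_(A : {set T} | A \subset U) \sum_(v <- s)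
    prob_active U q A *
    (if v \in A then latency dr d [seq x <- s | x \in A] v else 0)).
  rewrite exchange_big /= !big_seq; apply: eq_bigr => v vs.
  exact: (expect_cond q (fun A => latency dr d [seq x <- s | x \in A] v) (sU v vs)).
apply: eq_bigr => A _; rewrite big_mkcond mulr_sumr; apply: eq_bigr => v _.
by case: ifP => _; rewrite ?mulr0.
Qed.

Section Nonnegative.
Hypotheses (dr_ge0 : forall y, 0 <= dr y) (d_ge0 : forall x y, 0 <= d x y).

Lemma lat_at_ge0 s v B : 0 <= lat_at s v B.
Proof. by rewrite /lat_at latencyE lat_from_ge0. Qed.

Lemma lat_at_thin s v A b a :
  {in A, forall y, a <= b y} -> a <= 1 -> {in A, forall y, 0 <= b y <= 1} ->
  (2 * a - 1) * lat_at s v A <= expect A b (lat_at s v).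
Proof.
move=> a_le_b a1 b01; set t := [seq w <- s | w \in v |: A].
have filter_t B : B \subset A ->
    [seq w <- s | w \in v |: B] = [seq w <- t | w \in v |: B].
  move=> sBA; rewrite /t -filter_predI; apply: eq_filter => w /=.
  by case wB: (w \in v |: B) => //=; rewrite (subsetP (setUS _ sBA) w wB).
rewrite /lat_at latencyE -/t.
have lb := expect_lat_lb dr_ge0 d_ge0 (U := A) (q := b)
  (ind := fun B y => (y \in v |: B)%:R) v (s := t) (C := fun=> 1) None.
apply: le_trans (lb a _ _) _.
- move=> y; rewrite /t mem_filter => /andP[yvA _].
  case: (eqVneq y v) => [->|nyv].
    by rewrite (eq_expect _ (h := fun=> 1)) ?expect_cst // => B _; rewrite setU11.
  move: yvA; rewrite in_setU1 (negPf nyv) /= => yA.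
  rewrite (eq_expect _ (h := fun B => (y \in B)%:R)) ?expect_indicator ?yA ?a_le_b //.
  by move=> B _; rewrite in_setU1 (negPf nyv).
- by rewrite expect_cst.
- apply: ler_expect => // B sBA; rewrite filter_t // latencyE.
  exact: (lat_lb_le_filter dr_ge0 d_ge0 _ _ _ (b := true)).
Qed.

Lemma expect_lat_at_thin W q b a s v :
  {in W, forall y, a <= b y} -> a <= 1 -> {in W, forall y, 0 <= b y <= 1} ->
  {in W, forall y, 0 <= q y <= 1} ->
  (2 * a - 1) * expect W q (lat_at s v) <=
  expect W (fun y => q y * b y) (lat_at s v).
Proof.
move=> a_le_b a1 b01 q01; rewrite -expect_thin -expectZl.
apply: ler_expect => // A sAW; apply: lat_at_thin => // y yA.
  by apply/a_le_b/(subsetP sAW).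
by apply/b01/(subsetP sAW).
Qed.

Hypotheses (dr_tri : forall y w, dr w <= dr y + d y w)
           (d_tri : forall z y w, d z w <= d z y + d y w).

Lemma lat_at_mono s v B B' : B \subset B' -> lat_at s v B <= lat_at s v B'.
Proof.
move=> sBB'; rewrite /lat_at !latencyE.
apply: lat_from_filter_mono => //; last by rewrite setU11.
by move=> y; apply: (subsetP (setUS _ sBB')).
Qed.

Lemma lat_at_ge_root s v B : v \in s -> dr v <= lat_at s v B.
Proof.
move=> vs; rewrite /lat_at latencyE.
by apply: (hop_le_lat_from dr_tri d_tri None); rewrite mem_filter setU11.
Qed.

End Nonnegative.
End Thinning.

Lemma bigmin_seq_attained (R : realType) (I : eqType) (l : seq I) (F : I -> R) i0 :
  exists2 i, i \in i0 :: l & \big[Num.min/F i0]_(j <- l) F j = F i.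
Proof.
elim: l => [|j l [i il IH]]; first by exists i0; rewrite ?big_nil ?mem_head.
rewrite big_cons IH minEle; case: ifP => _; [exists j|exists i] => //.
  by rewrite !in_cons eqxx orbT.
by move: il; rewrite !in_cons => /orP[->|->]; rewrite ?orbT.
Qed.

Section Optimum.
Variables (R : realType) (T : finType) (dr : T -> R) (d : T -> T -> R).
Implicit Types (U : {set T}) (q : T -> R) (s : seq T).

Lemma OPT_le U q s : perm_eq s (enum U) -> OPT dr d U q <= exp_lat dr d U q s.
Proof. by move=> sU; apply: ge_bigmin_seq; rewrite ?mem_permutations. Qed.

Lemma OPT_attained U q :
  exists2 s, perm_eq s (enum U) & OPT dr d U q = exp_lat dr d U q s.
Proof.
rewrite /OPT.
have [s + ->] := bigmin_seq_attained (permutations (enum U)) (exp_lat dr d U q) (enum U).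
by rewrite in_cons mem_permutations => /orP[/eqP ->|]; [exists (enum U)|exists s].
Qed.

Lemma exp_lat_eq0 U q s : {in s, forall y, dr y = 0} ->
  (forall z y, dr z = 0 -> dr y = 0 -> d z y = 0) -> exp_lat dr d U q s = 0.
Proof.
move=> s0 d0; apply: big1 => A _; rewrite big1 ?mulr0 // => v _.
rewrite latencyE; apply: lat_from_eq0 => // y.
by rewrite mem_filter => /andP[_ /s0].
Qed.

Hypotheses (dr_ge0 : forall y, 0 <= dr y) (d_ge0 : forall x y, 0 <= d x y).

Lemma exp_lat_ge0 U q s : {in U, forall v, 0 <= q v <= 1} -> 0 <= exp_lat dr d U q s.
Proof.
move=> q01; apply: expect_ge0 => // A; apply: sumr_ge0 => v _.
by rewrite latencyE lat_from_ge0.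
Qed.

Lemma OPT_ge0 U q : {in U, forall v, 0 <= q v <= 1} -> 0 <= OPT dr d U q.
Proof. by move=> q01; have [s _ ->] := OPT_attained U q; exact: exp_lat_ge0. Qed.

End Optimum.

Section Constants.
Variable R : realType.

Lemma expRN_le_chord (x : R) :
  0 <= x <= 1 -> expR (- x) <= x * expR (-1) + (1 - x).
Proof.
move=> x01; have x01' : Itv.spec (@Itv.num_sem R) (Itv.Real `[0%Z, 1%Z]) x.
  rewrite /Itv.spec /Itv.num_sem /= in_itv /= x01 andbT ger0_real //.
  by case/andP: x01.
have := convex_expR (@Itv.mk _ _ (Itv.Real `[0%Z, 1%Z]) x x01') (-1) 0.
by rewrite !convRE /= expR0 mulr1 mulr0 addr0 mulrN1 [_ * expR (-1)]mulrC.
Qed.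

(* [625/256 = (5/4)^4 <= (exp (1/4))^4] *)
Lemma expR1_ge : (625 / 256 : R) <= expR 1.
Proof.
have -> : expR 1 = expR (1 / 4) ^+ 4 :> R by rewrite -expRM_natl; congr expR; field.
rewrite (_ : 625 / 256 = (5 / 4) ^+ 4); last by field.
rewrite lerXn2r ?nnegrE ?expR_ge0 //.
by apply: le_trans _ (expR_ge1Dx _); lra.
Qed.

Lemma two_expRN1_lt1 : 2 * expR (-1) < (1 : R).
Proof.
rewrite expRN -[2 * _]/(2 / expR 1) ltr_pdivrMr ?expR_gt0 // mul1r.
by have := expR1_ge; lra.
Qed.

Lemma inv_one_sub_two_expRN1_le :
  (1 - 2 * expR (-1))^-1 <= (expR 1 / (expR 1 - 1)) ^+ 4 :> R.
Proof.
rewrite expRN; set E := expR 1; have E_ge : 625 / 256 <= E := expR1_ge.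
have -> : 1 - 2 * E^-1 = (E - 2) / E by field; lra.
have E1 : 0 < E - 1 by lra.
rewrite invf_div expr_div_n ler_pdivlMr ?exprn_gt0 // mulrAC ler_pdivrMr; last lra.
have : 1 <= 2 * E * (E - 1) * (E - 2).
  apply: le_trans (_ : 2 * (625/256) * (625/256 - 1) * (625/256 - 2) <= _); first lra.
  by apply: ler_pM; [lra|lra| |lra]; apply: ler_pM; [lra|lra| |lra]; apply: ler_pM; lra.
move=> h; rewrite -subr_ge0 (_ : E ^+ 4 * (E - 2) - E * (E - 1) ^+ 4 =
                                 E * (2 * E * (E - 1) * (E - 2) - 1)); last by ring.
by apply: mulr_ge0; lra.
Qed.

Lemma one_sub_exprB_le (p : R) t : 0 <= p <= 1 -> 1 - (1 - p) ^+ t <= t%:R * p.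
Proof.
move=> /andP[p0 p1]; elim: t => [|t IH]; first by rewrite expr0 subrr mul0r.
rewrite exprS -natr1 mulrDl mul1r.
have : 0 <= (1 - p) ^+ t <= 1 by rewrite exprn_ge0 ?exprn_ile1 //; lra.
by nra.
Qed.

Lemma one_sub_exprB_ge (p x : R) t :
  0 <= p <= 1 -> 0 <= x <= 1 -> x <= t%:R * p ->
  (1 - expR (-1)) * x <= 1 - (1 - p) ^+ t.
Proof.
move=> /andP[p0 p1] x01 xtp.
have : (1 - p) ^+ t <= expR (- p) ^+ t.
  rewrite lerXn2r ?nnegrE ?expR_ge0 ?subr_ge0 //.
  by have := expR_ge1Dx (- p); lra.
have : expR (- p) ^+ t <= expR (- x) by rewrite -expRM_natl ler_expR mulrN lerN2.
have := expRN_le_chord x01; case/andP: x01 => x0 x1.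
lra.
Qed.

Lemma harmonic_ratio_le (n : R) : 2 <= n ->
  (1 + n^-1) * ((n - 1) / (n + 1))^-1 <= 1 + 16 * (n + 1)^-1.
Proof.
move=> n2; rewrite -subr_ge0.
have -> : 1 + 16 * (n + 1)^-1 - (1 + n^-1) * ((n - 1) / (n + 1))^-1 =
   (13 * n ^+ 2 - 20 * n - 1) / (n * (n - 1) * (n + 1)).
  by field; rewrite !gt_eqF //; lra.
by apply: divr_ge0; [nra|rewrite !mulr_ge0 //; lra].
Qed.

Local Open Scope classical_set_scope.

Lemma cvg_scaled_harmonic : (fun n : nat => 16 * (n.+1%:R)^-1 : R) @ \oo --> 0.
Proof. by rewrite -(mulr0 (16 : R)); apply: cvgMl_tmp; exact: cvg_harmonic. Qed.

End Constants.

Section Metric.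
Variables (R : realType) (V : finType) (d : V -> V -> R).
Hypothesis md : is_metric d.

Lemma metric_ge0 u w : 0 <= d u w. Proof. by case: md. Qed.
Lemma metric_refl u : d u u = 0. Proof. by case: md => _ refl _ _; apply/refl. Qed.
Lemma metric_sym u w : d u w = d w u. Proof. by case: md. Qed.
Lemma metric_tri u w z : d u z <= d u w + d w z. Proof. by case: md. Qed.

Lemma metric_eq0_root r u w : d r u = 0 -> d r w = 0 -> d u w = 0.
Proof.
move=> ru rw; apply/eqP; rewrite eq_le metric_ge0 andbT.
by have := metric_tri u r w; rewrite (metric_sym u r) ru rw addr0.
Qed.

End Metric.

Section ContiguousBlocks.
Variables (T K : eqType) (f : T -> K).

Definition block (s : seq T) (u : K) : seq T := [seq y <- s | f y == u].

(* [consecutive] of the uniform instance is [contiguous fst]. *)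
Definition contiguous (s : seq T) : Prop :=
  forall v s1 s2 s3, s = s1 ++ s2 ++ s3 ->
    v \in map f s1 -> v \in map f s3 -> all (fun x => f x == v) s2.

Lemma contiguous_behead y s : contiguous (y :: s) -> contiguous s.
Proof.
move=> cs v s1 s2 s3 e v1 v3; apply: (cs v (y :: s1) s2 s3) => //=.
  by rewrite e.
by rewrite in_cons v1 orbT.
Qed.

Lemma contiguous_head y z s : contiguous [:: y, z & s] ->
  f y \in map f (z :: s) -> f z = f y.
Proof.
move=> cs; rewrite /= in_cons; case: (eqVneq (f y) (f z)) => [//|_] /= ys.
have /= := cs (f y) [:: y] [:: z] s erefl.
by rewrite mem_head andbT => /(_ isT ys) /eqP.
Qed.

Lemma block_nil s u : u \notin map f s -> block s u = [::].
Proof.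
move=> us; apply/eqP; rewrite -[_ == _]negbK -has_filter.
by apply: contra us => /hasP[y ys /eqP <-]; rewrite map_f.
Qed.

Lemma block_neq0 s u : u \in map f s -> block s u != [::].
Proof. by case/mapP=> y ys ->; rewrite -has_filter; apply/hasP; exists y. Qed.

Lemma flatten_blocks s :
  contiguous s -> s = flatten (map (block s) (undup (map f s))).
Proof.
elim: s => [//|y s IH] cs; have {}IH := IH (contiguous_behead cs).
have block_cons u :
  block (y :: s) u = if f y == u then y :: block s u else block s u by [].
have other_blocks (U : seq K) :
    f y \notin U -> map (block (y :: s)) U = map (block s) U.
  move=> yU; apply/eq_in_map => u uU; rewrite block_cons.
  by case: eqP => // eyu; rewrite eyu uU in yU.
rewrite /=; case: ifPn => [ys|yns]; last first.
  by rewrite map_cons block_cons eqxx /= block_nil // other_blocks ?mem_undup // -IH.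
move: IH; set L := undup (map f s) => IH.
have : uniq L := undup_uniq _.
have : f y \in L by rewrite mem_undup.
case E: L IH => [//|u0 U] IH _ /andP[u0U _].
have u0s : u0 \in map f s by rewrite -mem_undup -/L E mem_head.
(* [s] starts with the block of [u0], which must be that of [f y] *)
case Eb: (block s u0) (block_neq0 u0s) => [//|w c] _.
have fw : f w = u0.
  have : w \in block s u0 by rewrite Eb mem_head.
  by rewrite mem_filter => /andP[/eqP].
have u0y : u0 = f y.
  by move: cs ys; rewrite IH /= Eb /= -fw; apply: contiguous_head.
by rewrite map_cons block_cons -u0y eqxx other_blocks -?u0y // {1}IH /= Eb.
Qed.

End ContiguousBlocks.

Section Reduction.
Variables (R : realType) (V : finType) (d : V -> V -> R) (r : V) (pv : V -> R).
Hypothesis md : is_metric d.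

Local Notation J := (Jtype pv).
Local Notation X := (Xset pv).
Local Notation SJ := (SJ pv).
Local Notation t := (tcopies pv).
Local Notation p := (pJ pv).
Local Notation costJ s :=
  (exp_lat (fun x : J => d r x.1) (fun x y : J => d x.1 y.1) SJ (fun=> p) s).
Local Notation OPTJ :=
  (OPT (fun x : J => d r x.1) (fun x y : J => d x.1 y.1) SJ (fun=> p)).
Local Notation cost U s := (exp_lat (d r) d U pv s).
Local Notation lat := (lat_at (d r) d).

Definition hit_prob (u : V) : R := 1 - (1 - p) ^+ t u.

Lemma tcopies_le_Kbound u : (t u <= Kbound pv)%N.
Proof. exact: leq_bigmax. Qed.

Lemma mem_SJ (y : J) : (y \in SJ) = (y.1 \in X) && (y.2 < t y.1)%N.
Proof. by rewrite inE. Qed.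

Lemma sum_SJ (G : V -> R) : \sum_(y in SJ) G y.1 = \sum_(u in X) (t u)%:R * G u.
Proof.
rewrite (eq_bigl (fun y : J => (y.1 \in X) && (y.2 < t y.1)%N)) => [|y]; last first.
  by rewrite mem_SJ.
rewrite -(pair_big_dep (fun u => u \in X) (fun u (i : 'I_(Kbound pv)) => (i < t u)%N)
                       (fun u _ => G u)).
apply: eq_bigr => u _.
rewrite (big_ord_narrow (F := fun=> G u) (tcopies_le_Kbound u)).
by rewrite sumr_const card_ord mulr_natl.
Qed.

Lemma card_SJ_fiber (x : J) u : u \in X -> u != x.1 ->
  #|[set y in SJ :\ x | y.1 == u]| = t u.
Proof.
move=> uX ux; rewrite -sum1_card.
rewrite (eq_bigl (fun y : J => (y.1 == u) && (y.2 < t y.1)%N)) => [|y]; last first.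
  rewrite in_set in_setD1 mem_SJ.
  case: (eqVneq y.1 u) => [yu|] /=; last by rewrite andbF.
  by rewrite yu uX andbT; case: eqP => // yx; rewrite -yx yu eqxx in ux.
rewrite -(pair_big_dep (pred1 u) (fun w (i : 'I_(Kbound pv)) => (i < t w)%N)
                       (fun _ _ => 1%N)) big_pred1_eq.
by rewrite (big_ord_narrow (F := fun=> 1%N) (tcopies_le_Kbound u)) sum1_card card_ord.
Qed.

(* Copies of a vertex are at distance 0 from each other and visited in one
   block, so only the set of groups hit by the active copies matters. *)
Lemma lat_at_blocks (s : seq J) (b : V -> seq J) (pi : seq V) x (A : {set J}) :
  s = flatten (map b pi) -> (forall u y, y \in b u -> y.1 = u) ->
  {in SJ, forall y, y \in b y.1} -> {subset pi <= X} ->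
  x \in SJ -> A \subset SJ :\ x ->
  lat_at (fun y => d r y.1) (fun y z => d y.1 z.1) s x A =
  lat pi x.1 ([set y.1 | y in A] :&: (X :\ x.1)).
Proof.
move=> -> b_fst SJ_b piX xS sA; rewrite /lat_at filter_flatten !latencyE -map_comp.
rewrite (lat_from_flatten (d r) (metric_refl md)
           (bb := fun u => [seq w <- b u | w \in x |: A])); last 2 first.
- by move=> u y; rewrite mem_filter => /andP[_ /b_fst].
- by rewrite mem_filter setU11 SJ_b.
congr lat_from; apply: eq_in_filter => u upi; rewrite -has_filter.
apply/hasP/idP => [[y yb]|].
  have <- := b_fst _ _ yb.
  rewrite !in_setU1 => /orP[/eqP ->|yA]; first by rewrite eqxx.
  have yX : y.1 \in X.
    by move: (subsetP sA y yA); rewrite in_setD1 mem_SJ => /andP[_ /andP[]].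
  by case: eqP => //= /eqP nyx; rewrite in_setI in_setD1 imset_f // nyx yX.
rewrite in_setU1 => /orP[/eqP ->|]; first by exists x; [apply: SJ_b|rewrite setU11].
rewrite in_setI => /andP[/imsetP[y yA ->] _].
exists y; last by rewrite in_setU1 yA orbT.
by apply: SJ_b; move: (subsetP sA y yA); rewrite in_setD1 => /andP[].
Qed.

Lemma costJ_blocks (s : seq J) (b : V -> seq J) (pi : seq V) :
  s = flatten (map b pi) -> (forall u y, y \in b u -> y.1 = u) ->
  {in SJ, forall y, y \in b y.1} -> {subset pi <= X} -> perm_eq s (enum SJ) ->
  costJ s = \sum_(u in X) (t u)%:R * (p * expect (X :\ u) hit_prob (lat pi u)).
Proof.
move=> es b_fst SJ_b piX sSJ.
rewrite exp_lat_decomp => [|y]; last by rewrite (perm_mem sSJ) mem_enum.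
rewrite (perm_big _ sSJ) big_enum /= -sum_SJ; apply: eq_bigr => x xS; congr (_ * _).
rewrite (eq_expect _ (h := fun A => lat pi x.1 ([set y.1 | y in A] :&: (X :\ x.1)))).
  rewrite expect_image; apply: eq_expect_prob => u; rewrite in_setD1 => /andP[ux uX].
  by rewrite card_SJ_fiber.
by move=> A sA; apply: (lat_at_blocks es b_fst SJ_b piX xS sA).
Qed.

Lemma lat_at_local (pi : seq V) u A : {subset pi <= X} ->
  lat pi u A = lat pi u (A :&: (X :\ u)).
Proof.
move=> piX; congr latency; apply: eq_in_filter => w wpi.
rewrite !in_setU1 in_setI in_setD1 piX // andbT.
by case: (eqVneq w u); rewrite ?andbT.
Qed.

Lemma cost_tour_X (U : {set V}) (pi : seq V) :
  X \subset U -> perm_eq pi (enum X) ->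
  cost U pi = \sum_(u in X) pv u * expect (X :\ u) pv (lat pi u).
Proof.
move=> XU piX.
have piX' : {subset pi <= X} by move=> w; rewrite (perm_mem piX) mem_enum.
rewrite exp_lat_decomp => [|w /piX'/(subsetP XU)//].
rewrite (perm_big _ piX) big_enum /=; apply: eq_bigr => u uX; congr (_ * _).
have -> : U :\ u = (X :\ u) :|: (U :\: X).
  apply/setP => w; rewrite in_setU !in_setD1 in_setD.
  case: (eqVneq w u) => [->|_] /=; first by rewrite uX.
  by case: (boolP (w \in X)) => [/(subsetP XU) ->|].
rewrite expect_local // => [|A]; last exact: lat_at_local.
rewrite -setI_eq0; apply/eqP/setP => w.
by rewrite in_setI in_setD1 in_setD in_set0; case: (w \in X); rewrite ?andbF.
Qed.

Definition blocks_tour (sig : seq V) : seq J :=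
  flatten (map (fun u => [seq y <- enum SJ | y.1 == u]) sig).

Lemma perm_blocks_tour sig :
  perm_eq sig (enum X) -> perm_eq (blocks_tour sig) (enum SJ).
Proof.
move=> sigX; apply: uniq_perm; last 2 first.
- exact: enum_uniq.
- move=> y; apply/flattenP/idP => [[c /mapP[u _ ->]]|yS].
    by rewrite mem_filter => /andP[_ ->].
  exists [seq z <- enum SJ | z.1 == y.1]; last by rewrite mem_filter eqxx yS.
  apply/mapP; exists y.1 => //; rewrite (perm_mem sigX) mem_enum.
  by move: yS; rewrite mem_enum mem_SJ => /andP[].
have : uniq sig by rewrite (perm_uniq sigX) enum_uniq.
rewrite /blocks_tour; elim: sig {sigX} => [//|u sig IH] /= /andP[usig sig_uniq].
rewrite cat_uniq filter_uniq ?enum_uniq // IH // andbT /=.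
apply/hasP => [[y /flattenP[c /mapP[w ws ->] yc] yu]].
move: yc yu; rewrite !mem_filter => /andP[/eqP yw _] /andP[/eqP yu _].
by move: usig; rewrite -yu yw ws.
Qed.

Lemma lat_ge0 pi u B : 0 <= lat pi u B.
Proof. exact: lat_at_ge0 (metric_ge0 md r) (metric_ge0 md) _ _ _. Qed.

Lemma lat_mono pi u (A B : {set V}) : A \subset B -> lat pi u A <= lat pi u B.
Proof.
exact: lat_at_mono (metric_ge0 md r) (metric_ge0 md)
                   (metric_tri md r) (metric_tri md) _ _ _ _.
Qed.

Section Probabilities.
Hypothesis pv01 : forall v, 0 <= pv v <= 1.
Local Notation n := (nV R V).

Lemma nV_gt0 (u : V) : 0 < n.
Proof. by rewrite ltr0n; apply/card_gt0P; exists u. Qed.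

Lemma Xset_gt0 u : u \in X -> 0 < pv u.
Proof.
by rewrite inE; apply: lt_le_trans; rewrite div1r invr_gt0 exprn_gt0 // (nV_gt0 u).
Qed.

Lemma pJ_le u : u \in X -> p <= pv u / n.
Proof.
move=> uX; rewrite /pJ div1r mulrC ler_pM2r ?invr_gt0 ?(nV_gt0 u) //.
exact: bigmin_le_cond.
Qed.

Lemma pJ_gt0 u : u \in X -> 0 < p.
Proof.
move=> uX; rewrite /pJ mulr_gt0 ?div1r ?invr_gt0 ?(nV_gt0 u) //.
apply: lt_le_trans (_ : 0 < 1 / n ^+ 2) _.
  by rewrite divr_gt0 ?exprn_gt0 ?(nV_gt0 u).
apply: le_bigmin => [|v]; last by rewrite inE.
by move: uX; rewrite inE => /le_trans; apply; case/andP: (pv01 u).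
Qed.

Lemma pJ_le1 u : u \in X -> p <= 1.
Proof.
move=> uX; apply: le_trans (pJ_le uX) _; rewrite ler_pdivrMr ?(nV_gt0 u) // mul1r.
apply: le_trans (_ : 1 <= n); first by case/andP: (pv01 u).
by rewrite ler1n; apply/card_gt0P; exists u.
Qed.

Lemma tcopies_bounds u : u \in X -> pv u <= (t u)%:R * p <= pv u + p.
Proof.
move=> uX; have p0 := pJ_gt0 uX; have /andP[pu0 _] := pv01 u.
have -> : (t u)%:R = (Num.ceil (pv u / p))%:~R :> R.
  rewrite /tcopies natr_absz ger0_norm // ceil_ge0.
  exact: lt_le_trans (divr_ge0 pu0 (ltW p0)).
rewrite -ler_pdivrMr // ceil_ge /= -ler_pdivlMr // mulrDl divff ?gt_eqF //.
by apply: ltW; have := ceilB1_lt (pv u / p); rewrite intrB; lra.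
Qed.

Lemma hit_prob01 u : u \in X -> 0 <= hit_prob u <= 1.
Proof.
move=> uX; have := pJ_gt0 uX; have := pJ_le1 uX => p1 p0.
have : 0 <= (1 - p) ^+ t u <= 1 by rewrite exprn_ge0 ?exprn_ile1 //; lra.
by rewrite /hit_prob; lra.
Qed.

Lemma hit_prob_le u : u \in X -> hit_prob u <= (t u)%:R * p.
Proof.
move=> uX; apply: one_sub_exprB_le.
by rewrite (ltW (pJ_gt0 uX)) (pJ_le1 uX).
Qed.

Lemma hit_prob_ge u : u \in X -> (1 - expR (-1)) * pv u <= hit_prob u.
Proof.
move=> uX; apply: one_sub_exprB_ge => //.
  by rewrite (ltW (pJ_gt0 uX)) (pJ_le1 uX).
by case/andP: (tcopies_bounds uX).
Qed.

Lemma in_XD1 u w : w \in X :\ u -> w \in X.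
Proof. by rewrite in_setD1 => /andP[]. Qed.

Lemma expect_pv_le_hit pi u :
  expect (X :\ u) pv (lat pi u) <=
  (1 - 2 * expR (-1))^-1 * expect (X :\ u) hit_prob (lat pi u).
Proof.
set a : R := 1 - expR (-1).
have a01 : 0 <= a <= 1.
  by rewrite /a subr_ge0 expR_le1 lerN10 gerBl expR_ge0.
have a_gt : 0 < 2 * a - 1 by rewrite /a; have := @two_expRN1_lt1 R; lra.
rewrite (_ : 1 - 2 * expR (-1) = 2 * a - 1); last by rewrite /a; ring.
rewrite ler_pdivlMl //.
apply: le_trans (_ : _ <= expect (X :\ u) (fun w => pv w * a) _) _.
  have [a0 a1] := andP a01.
  by apply: (expect_lat_at_thin (metric_ge0 md r) (metric_ge0 md)) => // w _.
apply: ler_expect_prob.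
- move=> w _; case/andP: (pv01 w) => pw0 pw1; case/andP: a01 => a0 a1.
  by rewrite mulr_ge0 ?mulr_ile1.
- by move=> w /in_XD1 /hit_prob01.
- by move=> w /in_XD1 wX; rewrite mulrC hit_prob_ge.
- by move=> A B; apply: lat_mono.
Qed.

Lemma expect_hit_le_pv pi u : 1 < n ->
  expect (X :\ u) hit_prob (lat pi u) <=
  ((n - 1) / (n + 1))^-1 * expect (X :\ u) pv (lat pi u).
Proof.
move=> n1; set c := 1 + n^-1.
have c_ge1 : 1 <= c by rewrite /c lerDl invr_ge0 ltW // (lt_trans ltr01 n1).
(* dominate [hit_prob] by [q'], then thin [q'] down to [pv] *)
set q' := fun w => Num.min 1 (pv w * c).
have q'_gt0 w : w \in X -> 0 < q' w.
  by move=> wX; rewrite lt_min ltr01 mulr_gt0 ?Xset_gt0 // (lt_le_trans ltr01 c_ge1).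
have pv_le_q' w : pv w <= q' w.
  by case/andP: (pv01 w) => pw0 pw1; rewrite le_min pw1 ler_peMr.
have q'01 : {in X :\ u, forall w, 0 <= q' w <= 1}.
  by move=> w /in_XD1 wX; rewrite ltW ?q'_gt0 //= ge_min lexx.
have -> : (n - 1) / (n + 1) = 2 * c^-1 - 1.
  by rewrite /c; field; rewrite !gt_eqF //; lra.
have c_gt : 0 < 2 * c^-1 - 1.
  rewrite /c (_ : 2 * (1 + n^-1)^-1 - 1 = (n - 1) / (n + 1)).
    by rewrite divr_gt0 //; lra.
  by field; rewrite !gt_eqF //; lra.
rewrite ler_pdivlMl //.
apply: le_trans (_ : _ <= (2 * c^-1 - 1) * expect (X :\ u) q' _) _.
  apply: ler_wpM2l; first exact: ltW.
  apply: ler_expect_prob => //.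
  - by move=> w /in_XD1 /hit_prob01.
  - move=> w /in_XD1 wX; rewrite le_min; case/andP: (hit_prob01 wX) => _ -> /=.
    apply: le_trans (hit_prob_le wX) _.
    case/andP: (tcopies_bounds wX) => _ /le_trans; apply.
    by rewrite /c mulrDr mulr1 lerD2l; apply: pJ_le.
  - by move=> A B; apply: lat_mono.
rewrite -[X in _ <= X](eq_expect_prob (q := fun w => q' w * (pv w / q' w))); last first.
  by move=> w /in_XD1 wX; rewrite mulrC divfK // gt_eqF // q'_gt0.
apply: (expect_lat_at_thin (metric_ge0 md r) (metric_ge0 md)) => //.
- move=> w /in_XD1 wX; rewrite ler_pdivlMr ?q'_gt0 // mulrC -ler_pdivlMr ?invr_gt0.
    by rewrite invrK ge_min lexx orbT.
  by apply: lt_le_trans c_ge1.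
- by rewrite invr_le1 // ?unitfE ?gt_eqF //; apply: lt_le_trans c_ge1.
- move=> w /in_XD1 wX; case/andP: (pv01 w) => pw0 _.
  by rewrite divr_ge0 ?(ltW (q'_gt0 w wX)) //= ler_pdivrMr ?q'_gt0 // mul1r pv_le_q'.
Qed.

Lemma tcopies_gt0 u : u \in X -> (0 < t u)%N.
Proof.
move=> uX; rewrite lt0n; apply/negP => /eqP t0.
case/andP: (tcopies_bounds uX); rewrite t0 mul0r.
by move=> /(lt_le_trans (Xset_gt0 uX)); rewrite ltxx.
Qed.

Lemma induced_tour_mem (sJ : seq J) : is_tour SJ sJ -> {subset induced_tour sJ <= X}.
Proof.
case=> _ sJ_SJ u; rewrite mem_undup => /mapP[y + ->].
by rewrite sJ_SJ mem_SJ => /andP[].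
Qed.

Lemma perm_induced_tour (sJ : seq J) :
  is_tour SJ sJ -> perm_eq (induced_tour sJ) (enum X).
Proof.
move=> tour; apply: uniq_perm; rewrite ?undup_uniq ?enum_uniq // => u.
rewrite mem_enum; apply/idP/idP => [/(induced_tour_mem tour) //|uX].
have tu := tcopies_gt0 uX.
pose y : J := (u, Ordinal (leq_trans tu (tcopies_le_Kbound u))).
by rewrite mem_undup; apply/mapP; exists y; rewrite ?tour.2 ?mem_SJ /= ?uX.
Qed.

Lemma costJ_consecutive (sJ : seq J) : is_tour SJ sJ -> consecutive sJ ->
  costJ sJ = \sum_(u in X)
    (t u)%:R * (p * expect (X :\ u) hit_prob (lat (induced_tour sJ) u)).
Proof.
move=> tour cons; apply: (costJ_blocks (b := block fst sJ)).
- exact: flatten_blocks.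
- by move=> u y; rewrite mem_filter => /andP[/eqP].
- by move=> y yS; rewrite mem_filter eqxx tour.2.
- exact: induced_tour_mem.
- by apply: uniq_perm; rewrite ?enum_uniq ?tour.1 // => y; rewrite tour.2 mem_enum.
Qed.

Lemma costJ_blocks_tour sig : perm_eq sig (enum X) ->
  costJ (blocks_tour sig) =
  \sum_(u in X) (t u)%:R * (p * expect (X :\ u) hit_prob (lat sig u)).
Proof.
move=> sigX; apply: costJ_blocks; rewrite ?perm_blocks_tour //.
- by move=> u y; rewrite mem_filter => /andP[/eqP].
- by move=> y yS; rewrite mem_filter eqxx mem_enum.
- by move=> u; rewrite (perm_mem sigX) mem_enum.
Qed.

Lemma cost_induced_le (sJ : seq J) : is_tour SJ sJ -> consecutive sJ ->
  cost [set: V] (induced_tour sJ) <= (1 - 2 * expR (-1))^-1 * costJ sJ.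
Proof.
move=> tour cons; set pi := induced_tour sJ.
rewrite cost_tour_X ?subsetT ?perm_induced_tour // costJ_consecutive // mulr_sumr.
apply: ler_sum => u uX; set E := expect (X :\ u) hit_prob (lat pi u).
rewrite (_ : _ * (_ * (_ * E)) = ((t u)%:R * p) * ((1 - 2 * expR (-1))^-1 * E));
  last by ring.
apply: ler_pM; rewrite ?expect_pv_le_hit //.
- by case/andP: (pv01 u).
- by apply: expect_ge0 => [w _|A]; [exact: pv01|exact: lat_ge0].
- by case/andP: (tcopies_bounds uX).
Qed.

Lemma OPTJ_le : 1 < n ->
  OPTJ <= (1 + n^-1) * ((n - 1) / (n + 1))^-1 * OPT (d r) d X pv.
Proof.
move=> n1; have [sig sigX ->] := OPT_attained (d r) d X pv.
apply: le_trans (OPT_le _ _ _ (perm_blocks_tour sigX)) _.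
rewrite costJ_blocks_tour // cost_tour_X // mulr_sumr; apply: ler_sum => u uX.
set E := expect (X :\ u) pv (lat sig u).
rewrite (_ : _ * _ * (pv u * E) = (pv u * (1 + n^-1)) * (((n - 1) / (n + 1))^-1 * E));
  last by ring.
rewrite mulrA; apply: ler_pM; rewrite ?expect_hit_le_pv //.
- by rewrite mulr_ge0 ?ler0n ?(ltW (pJ_gt0 uX)).
- by apply: expect_ge0 => [w /in_XD1 /hit_prob01|A] //; exact: lat_ge0.
- case/andP: (tcopies_bounds uX) => _ /le_trans; apply.
  by rewrite mulrDr mulr1 lerD2l; apply: pJ_le.
Qed.

Lemma costJ_gt0 u0 (sJ : seq J) : u0 \in X -> d r u0 != 0 ->
  is_tour SJ sJ -> consecutive sJ -> 0 < costJ sJ.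
Proof.
move=> u0X ru0 tour cons; set pi := induced_tour sJ.
have pi_mem : u0 \in pi by rewrite (perm_mem (perm_induced_tour tour)) mem_enum.
rewrite costJ_consecutive // (bigD1 u0) //=; apply: ltr_pwDl; last first.
  apply: sumr_ge0 => u /andP[uX _].
  apply/mulr_ge0/mulr_ge0; rewrite ?ler0n ?(ltW (pJ_gt0 uX)) //.
  by apply: expect_ge0 => [w /in_XD1 /hit_prob01|A] //; exact: lat_ge0.
rewrite mulrA; apply: lt_le_trans (_ : 0 < pv u0 * d r u0) _.
  by rewrite mulr_gt0 ?Xset_gt0 // lt_def ru0 metric_ge0.
apply: ler_pM; rewrite ?metric_ge0 //; first by case/andP: (pv01 u0).
  by case/andP: (tcopies_bounds u0X).
rewrite -[X in X <= _](expect_cst (X :\ u0) hit_prob).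
apply: ler_expect => // [w /in_XD1 /hit_prob01 //|A _].
exact: lat_at_ge_root (metric_tri md r) (metric_tri md) _ _ _ pi_mem.
Qed.

Lemma OPT_X_ge0 : 0 <= OPT (d r) d X pv.
Proof. by apply: OPT_ge0 => [y|y z|y _]; rewrite ?metric_ge0. Qed.

Lemma induced_tour_bound u0 rho (sJ : seq J) : u0 \in X -> d r u0 != 0 ->
  is_tour SJ sJ -> consecutive sJ ->
  costJ sJ <= rho * OPTJ ->
  cost [set: V] (induced_tour sJ) <=
  (1 + 16 * (n + 1)^-1) * (expR 1 / (expR 1 - 1)) ^+ 4 * rho * OPT (d r) d X pv.
Proof.
move=> u0X ru0 tour cons hJ.
have n2 : 2 <= n.
  rewrite (ler_nat R 2); apply/card_gt1P; exists u0, r; split => //.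
  by apply: contraNneq ru0 => ->; rewrite metric_refl.
have p01 : {in SJ, forall y : J, 0 <= p <= 1}.
  by move=> y _; rewrite ltW ?(pJ_gt0 u0X) ?(pJ_le1 u0X).
have OPTJ0 := OPT_ge0 (fun y => metric_ge0 md r y.1)
                      (fun y z => metric_ge0 md y.1 z.1) p01.
have OPTX0 := OPT_X_ge0.
(* [costJ sJ > 0] forces [rho > 0] *)
have rho0 : 0 <= rho.
  rewrite leNgt; apply/negP => rho_lt0.
  have := mulr_le0_ge0 (ltW rho_lt0) OPTJ0; have := costJ_gt0 u0X ru0 tour cons.
  by lra.
have K1_ge0 : 0 <= (1 - 2 * expR (-1))^-1 :> R.
  by rewrite invr_ge0 subr_ge0 ltW ?two_expRN1_lt1.
have cK2_ge0 : 0 <= (1 + n^-1) * ((n - 1) / (n + 1))^-1.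
  have ninv : 0 <= n^-1 by rewrite invr_ge0; lra.
  by rewrite mulr_ge0 ?invr_ge0 ?divr_ge0 //; lra.
apply: le_trans (cost_induced_le tour cons) _.
apply: le_trans (ler_wpM2l K1_ge0 (le_trans hJ (ler_wpM2l rho0 (OPTJ_le _)))) _.
  by lra.
rewrite (_ : _ * _ * rho * _ = (expR 1 / (expR 1 - 1)) ^+ 4 *
                 (rho * ((1 + 16 * (n + 1)^-1) * OPT (d r) d X pv))); last by ring.
apply: ler_pM => //.
- by rewrite mulr_ge0 // mulr_ge0.
- exact: inv_one_sub_two_expRN1_le.
- by apply: ler_wpM2l => //; apply: ler_wpM2r => //; exact: harmonic_ratio_le.
Qed.

Lemma cost_eq0_root U s : {in s, forall u, d r u = 0} -> cost U s = 0.
Proof. by move=> s0; apply: exp_lat_eq0 => // z y; apply: metric_eq0_root. Qed.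

Lemma OPT_eq0_root : {in X, forall u, d r u = 0} -> OPT (d r) d X pv = 0.
Proof.
move=> X0; apply: le_anti; rewrite OPT_X_ge0 andbT.
apply: le_trans (OPT_le _ _ _ (perm_refl (enum X))) _.
by rewrite cost_eq0_root // => u; rewrite mem_enum => /X0.
Qed.

End Probabilities.
End Reduction.

Local Open Scope classical_set_scope.

Theorem corollary1 (R : realType) :
  exists f : nat -> R, f @ \oo --> 0 /\
  forall (V : finType) (d : V -> V -> R) (r : V) (pv : V -> R),
    is_metric d ->
    (forall v, 0 <= pv v <= 1) ->
    forall (rho : R) (sJ : seq (Jtype pv)),
      is_tour (SJ pv) sJ ->
      consecutive sJ ->
      exp_lat (fun x => d r x.1) (fun x y => d x.1 y.1)
              (SJ pv) (fun _ => pJ pv) sJ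
        <= rho * OPT (fun x => d r x.1) (fun x y => d x.1 y.1)
                     (SJ pv) (fun _ => pJ pv) ->
      exp_lat (d r) d [set: V] pv (induced_tour sJ)
        <= (1 + f #|V|) * (expR 1 / (expR 1 - 1)) ^+ 4 * rho
           * OPT (d r) d (Xset pv) pv.
Proof.
exists (fun n : nat => 16 * (n.+1%:R)^-1); split; first exact: cvg_scaled_harmonic.
move=> V d r pv md pv01 rho sJ tour consJ hJ.
have [[u0 u0X ru0]|root0] := pselect (exists2 u0, u0 \in Xset pv & d r u0 != 0).
  rewrite /= -[#|V|.+1%:R]natr1.
  exact: (induced_tour_bound md pv01 u0X ru0 tour consJ hJ).
have {}root0 : {in Xset pv, forall u, d r u = 0}.
  by move=> u uX; apply/eqP; apply: contra_notT root0 => ru; exists u.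
rewrite (cost_eq0_root pv md) ?(OPT_eq0_root md pv01 root0) ?mulr0 // => u.
by move=> /(induced_tour_mem tour) /root0.
Qed.
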